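(* Let $R$ be a commutative Artinian ring and $M$ a non-zero $R$-module. Let $\sum_{i=1}^n N_i=M=\sum_{j=1}^m K_j$ be two minimal PS-hollow representations of $M$, where $N_i$ is $H_i$-PS-hollow for each $i\in\{1,\dots,n\}$ and $K_j$ is $H'_j$-PS-hollow for each $j\in\{1,\dots,m\}$. Then $n=m$, $\{H_1,\dots,H_n\}=\{H'_1,\dots,H'_n\}$, and $In(N_i)=In(K_j)$ whenever $H_i=H'_j$.
   Context: All rings are commutative with unity. An $R$-submodule $N\leq M$ is PS-hollow iff for every ideal $I\leq R$ and every submodule $L\leq M$: $N\subseteq IM+L$ implies $N\subseteq IM$ or $N\subseteq L$. For a PS-hollow $N\leq M$ put $A_N=\{I\leq R: N\subseteq IM\}$, $H_N$ the set of minimal elements of $A_N$ (w.r.t. inclusion), and $In(N)=\bigcap_{I\in H_N} IM$ ($=M$ if $H_N=\emptyset$). For a set $H$ of ideals, $N$ is $H$-PS-hollow iff $N$ is PS-hollow and $H_N=H$. A minimal PS-hollow representation of $M$ is an expression $M=\sum_{i=1}^n N_i$ with each $N_i$ $H_i$-PS-hollow, such that $In(N_1),\dots,In(N_n)$ are pairwise incomparable and $N_j\not\subseteq\sum_{i\neq j}N_i$ for every $j$. *)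

From mathcomp Require Import all_boot all_algebra.
Set Implicit Arguments. Unset Strict Implicit. Unset Printing Implicit Defensive.
Import GRing.Theory.
Local Open Scope ring_scope.

Section PSHollow.
Variables (R : comNzRingType) (M : lmodType R).

Definition subsetM (A B : M -> Prop) : Prop := forall x, A x -> B x.

Definition is_ideal (I : R -> Prop) : Prop :=
  [/\ I 0, (forall a b, I a -> I b -> I (a + b)) & (forall r a, I a -> I (r * a))].

Definition is_submodule (N : M -> Prop) : Prop :=
  [/\ N 0, (forall a b, N a -> N b -> N (a + b)) & (forall (r : R) a, N a -> N (r *: a))].

Definition IM (I : R -> Prop) : M -> Prop :=
  fun x => exists s : seq (R * M),
    (forall p, p \in s -> I p.1) /\ x = \sum_(p <- s) p.1 *: p.2.

Definition addS (A B : M -> Prop) : M -> Prop :=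
  fun x => exists a b, A a /\ B b /\ x = a + b.

Definition sumS (n : nat) (N : 'I_n -> M -> Prop) : M -> Prop :=
  fun x => exists f : 'I_n -> M, (forall i, N i (f i)) /\ x = \sum_(i < n) f i.

Definition sumS_but (n : nat) (N : 'I_n -> M -> Prop) (j : 'I_n) : M -> Prop :=
  fun x => exists f : 'I_n -> M, (forall i, i != j -> N i (f i)) /\
                                 x = \sum_(i < n | i != j) f i.

Definition PS_hollow (N : M -> Prop) : Prop :=
  is_submodule N /\
  forall (I : R -> Prop) (L : M -> Prop), is_ideal I -> is_submodule L ->
    subsetM N (addS (IM I) L) -> subsetM N (IM I) \/ subsetM N L.

Definition A_N (N : M -> Prop) (I : R -> Prop) : Prop :=
  is_ideal I /\ subsetM N (IM I).

Definition H_N (N : M -> Prop) (I : R -> Prop) : Prop :=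
  A_N N I /\ forall J, A_N N J -> (forall r, J r -> I r) -> (forall r, I r -> J r).

(* In(N) = intersection of IM over I in H_N (= M if H_N is empty) *)
Definition In_N (N : M -> Prop) : M -> Prop :=
  fun x => forall I, H_N N I -> IM I x.

Definition H_PS_hollow (H : (R -> Prop) -> Prop) (N : M -> Prop) : Prop :=
  PS_hollow N /\ forall I, H_N N I <-> H I.

Definition min_PS_rep (n : nat) (N : 'I_n -> M -> Prop)
    (H : 'I_n -> (R -> Prop) -> Prop) : Prop :=
  [/\ (forall i, H_PS_hollow (H i) (N i)),
      (forall x : M, sumS N x),
      (forall i j, i != j -> ~ subsetM (In_N (N i)) (In_N (N j))) &
      (forall j, ~ subsetM (N j) (sumS_but N j))].

End PSHollow.

Definition same_ideal_set (R : comNzRingType) (H H' : (R -> Prop) -> Prop) : Prop :=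
  forall I, H I <-> H' I.

Definition artinian (R : comNzRingType) : Prop :=
  forall I : nat -> R -> Prop, (forall k, is_ideal (I k)) ->
    (forall k r, I k.+1 r -> I k r) ->
    exists k0, forall k, (k0 <= k)%N -> forall r, I k r <-> I k0 r.

(** If a PS-hollow submodule [N] lies in [M = K_1 + ... + K_m] but, for every
    [j], escapes some [I_j M] with [I_j] in [H_{K_j}], then peeling the summands
    off one at a time with the PS-hollow property puts [N] in the empty sum [0],
    a contradiction as soon as [m > 0].  Over an Artinian ring every ideal of
    [A_N] contains one of [H_N], so [N_i] lying in every [I M], [I] in
    [H_{K_j}], means [In(N_i) <= In(K_j)].  Going back and forth between the
    two representations and using that the [In(N_i)] are pairwise incomparable,
    each [In(N_i)] equals exactly one [In(K_j)] and vice versa, which matches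
    the summands bijectively.  Finally [H_N] and [In(N)] determine each other,
    since [A_N = A_{In(N)}]. *)
From mathcomp Require Import all_boot all_algebra.
From Stdlib Require Import Classical ClassicalEpsilon.
Set Implicit Arguments. Unset Strict Implicit. Unset Printing Implicit Defensive.
Import GRing.Theory.
Local Open Scope ring_scope.

Lemma leq_of_left_unique_total (n m : nat) (r : 'I_n -> 'I_m -> Prop) :
  (forall i, exists j, r i j) -> (forall i i' j, r i j -> r i' j -> i = i') ->
  (n <= m)%N.
Proof.
move=> total unique; have [f rf] := choice _ total.
have f_inj : injective f by move=> i i' eq_f; apply: (unique _ _ (f i)); rewrite // eq_f.
by have := leq_card f f_inj; rewrite !card_ord.
Qed.

Section PSHollowRepresentations.
Variables (R : comNzRingType) (M : lmodType R).
Implicit Types (I J : R -> Prop) (N : M -> Prop).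

Lemma IM0 I : IM I (0 : M).
Proof. by exists [::]; rewrite big_nil. Qed.

Lemma IM_mono I J (x : M) : (forall r, I r -> J r) -> IM I x -> IM J x.
Proof. by move=> sIJ [s [sI ->]]; exists s; split=> // p /sI /sIJ. Qed.

Lemma sub_In_N N : subsetM N (In_N N).
Proof. by move=> x Nx I [[_ sNI] _]; apply: sNI. Qed.

Lemma A_N_ext N1 N2 : (forall x, N1 x <-> N2 x) -> forall I, A_N N1 I <-> A_N N2 I.
Proof. by move=> eqN I; split=> -[idI sub]; split=> // x /eqN /sub. Qed.

Lemma H_N_ext N1 N2 :
  (forall I, A_N N1 I <-> A_N N2 I) -> forall I, H_N N1 I <-> H_N N2 I.
Proof.
by move=> eqA I; split=> -[/eqA AI Imin]; split=> // J /eqA; apply: Imin.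
Qed.

Lemma In_N_ext N1 N2 :
  (forall I, H_N N1 I <-> H_N N2 I) -> forall x, In_N N1 x <-> In_N N2 x.
Proof. by move=> eqH x; split=> Inx I /eqH /Inx. Qed.

Section Artinian.
Hypothesis artR : artinian R.

Lemma artinian_minimal (P : (R -> Prop) -> Prop) J :
  (forall I, P I -> is_ideal I) -> P J ->
  exists2 I, P I /\ (forall r, I r -> J r) &
    forall I', P I' -> (forall r, I' r -> I r) -> forall r, I r -> I' r.
Proof.
move=> P_ideal PJ; apply: NNPP => no_min.
pose below I := P I /\ forall r, I r -> J r.
pose descent I I' :=
  below I -> [/\ below I', forall r, I' r -> I r & ~ forall r, I r -> I' r].
have [step stepP] : exists step, forall I, descent I (step I).
  apply: (choice _) => I; case: (classic (below I)) => [bI|nbI]; last by exists I.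
  apply: NNPP => no_desc; apply: no_min; exists I => // I' PI' sI'I r Ir.
  apply: NNPP => nI'r; apply: no_desc; exists I' => _.
  by split=> [|//|sII']; [split=> // r' /sI'I /bI.2 | apply/nI'r/sII'].
pose chain k := iter k step J.
have chain_below k : below (chain k).
  by elim: k => [|k IH]; [split | have [] := stepP _ IH].
have chain_decr k r : chain k.+1 r -> chain k r.
  by have [_ + _] := stepP _ (chain_below k); apply.
have [k0 stable] := artR (fun k => P_ideal _ (chain_below k).1) chain_decr.
by have [_ _] := stepP _ (chain_below k0); apply=> r /(stable k0.+1 (leqnSn _)).
Qed.

Lemma exists_H_N N J : A_N N J -> exists2 I, H_N N I & forall r, I r -> J r.
Proof.
move=> AJ; have [I [AI sIJ] Imin] := artinian_minimal (P := A_N N) (fun I AI => AI.1) AJ.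
by exists I.
Qed.

Lemma In_N_sub_IM N I : A_N N I -> subsetM (In_N N) (IM I).
Proof.
by move=> /exists_H_N[I0 HI0 sI0I] x /(_ I0 HI0); apply: IM_mono.
Qed.

Lemma A_N_In_N N I : A_N (In_N N) I <-> A_N N I.
Proof.
split=> -[idI sub]; split=> // x; first by move/sub_In_N; apply: sub.
exact: In_N_sub_IM.
Qed.

Lemma H_N_eq_In_N N1 N2 :
  (forall x, In_N N1 x <-> In_N N2 x) -> forall I, H_N N1 I <-> H_N N2 I.
Proof.
move=> eqIn; apply: H_N_ext => I.
by rewrite -A_N_In_N -[A_N N2 I]A_N_In_N; apply: A_N_ext.
Qed.

Lemma In_N_sub N1 N2 :
  (forall J, H_N N2 J -> subsetM N1 (IM J)) -> subsetM (In_N N1) (In_N N2).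
Proof.
move=> sub x Inx J HJ; apply: In_N_sub_IM Inx.
by split; [exact: HJ.1.1 | apply: sub].
Qed.

End Artinian.

Section FiniteSum.
Variables (m : nat) (K : 'I_m -> M -> Prop).
Hypothesis K_submodule : forall j, is_submodule (K j).

Definition sumS_from (k : nat) : M -> Prop :=
  fun x => exists f : 'I_m -> M,
    (forall j, K j (f j)) /\ x = \sum_(j < m | (k <= j)%N) f j.

Lemma sumS_from_submodule k : is_submodule (sumS_from k).
Proof.
split.
- by exists (fun=> 0); split=> [j|]; [case: (K_submodule j) | rewrite big1].
- move=> _ _ [f [Kf ->]] [g [Kg ->]]; exists (fun j => f j + g j).
  by split=> [j|]; [case: (K_submodule j) => _ + _; apply | rewrite big_split].
- move=> r _ [f [Kf ->]]; exists (fun j => r *: f j).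
  by split=> [j|]; [case: (K_submodule j) => _ _; apply | rewrite scaler_sumr].
Qed.

Lemma sumS_from_split k (lt_km : (k < m)%N) :
  subsetM (sumS_from k) (addS (K (Ordinal lt_km)) (sumS_from k.+1)).
Proof.
move=> _ [f [Kf ->]]; exists (f (Ordinal lt_km)), (\sum_(j < m | (k < j)%N) f j).
split=> //; split; first by exists f.
rewrite (bigD1 (Ordinal lt_km)) //=; congr (_ + _); apply: eq_bigl => j.
by rewrite ltn_neqAle andbC -val_eqE eq_sym.
Qed.

Lemma sumS_from_end x : sumS_from m x -> x = 0.
Proof. by case=> f [_ ->]; rewrite big_pred0 // => j; rewrite leqNgt ltn_ord. Qed.

Lemma PS_hollow_sub_sumS N0 (I : 'I_m -> R -> Prop) :
  PS_hollow N0 -> (forall j, is_ideal (I j)) ->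
  (forall j, subsetM (K j) (IM (I j))) -> subsetM N0 (sumS K) -> (0 < m)%N ->
  exists j, subsetM N0 (IM (I j)).
Proof.
move=> [_ hollow] I_ideal sKI sN0K m_gt0; apply: NNPP => no_j.
have peel k : (k <= m)%N -> subsetM N0 (sumS_from k).
  elim: k => [_ x /sN0K [f [Kf ->]] | k IH lt_km]; first by exists f.
  have sN0_sum : subsetM N0 (addS (IM (I (Ordinal lt_km))) (sumS_from k.+1)).
    move=> x /(IH (ltnW lt_km)) /sumS_from_split[a [b [Ka [Lb ->]]]].
    by exists a, b; split; first exact: sKI.
  case: (hollow _ _ (I_ideal _) (sumS_from_submodule _) sN0_sum) => // sN0I.
  by case: no_j; exists (Ordinal lt_km).
apply: no_j; exists (Ordinal m_gt0) => x /(peel m (leqnn m)) /sumS_from_end ->.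
exact: IM0.
Qed.

Lemma PS_hollow_sub_H_N_component N0 :
  PS_hollow N0 -> subsetM N0 (sumS K) -> (0 < m)%N ->
  exists j, forall J, H_N (K j) J -> subsetM N0 (IM J).
Proof.
move=> hollow sN0K m_gt0; apply: NNPP => no_j.
have escape j : exists J, H_N (K j) J /\ ~ subsetM N0 (IM J).
  apply: NNPP => no_J; apply: no_j; exists j => J HJ.
  by apply: NNPP => nsub; apply: no_J; exists J.
have [J JP] := choice _ escape.
have [j sN0J] := PS_hollow_sub_sumS hollow (fun j => (JP j).1.1.1)
  (fun j => (JP j).1.1.2) sN0K m_gt0.
exact: (JP j).2.
Qed.

End FiniteSum.

Lemma min_PS_rep_size_gt0 n (N : 'I_n -> M -> Prop) H :
  (exists x : M, x <> 0) -> min_PS_rep N H -> (0 < n)%N.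
Proof.
move=> [x x_neq0] [_ sumN _ _]; case: n N H sumN => // N _ sumN.
by case: x_neq0; have [f [_ ->]] := sumN x; apply: big_ord0.
Qed.

Lemma min_PS_rep_In_N_inj n (N : 'I_n -> M -> Prop) H i i' :
  min_PS_rep N H -> subsetM (In_N (N i)) (In_N (N i')) -> i = i'.
Proof.
by move=> [_ _ incomparable _] sub; case: (eqVneq i i') => // /incomparable /(_ sub).
Qed.

Lemma min_PS_rep_In_N_match n m (N : 'I_n -> M -> Prop) H
    (K : 'I_m -> M -> Prop) H' :
  artinian R -> (exists x : M, x <> 0) ->
  min_PS_rep N H -> min_PS_rep K H' ->
  forall i, exists j, forall x, In_N (N i) x <-> In_N (K j) x.
Proof.
move=> artR M_neq0 repN repK i.
have [hollowN sumN _ _] := repN; have [hollowK sumK _ _] := repK.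
have [j /(In_N_sub artR) sNK] := PS_hollow_sub_H_N_component
  (fun j => (hollowK j).1.1) (hollowN i).1 (fun x _ => sumK x)
  (min_PS_rep_size_gt0 M_neq0 repK).
have [i' /(In_N_sub artR) sKN] := PS_hollow_sub_H_N_component
  (fun i => (hollowN i).1.1) (hollowK j).1 (fun x _ => sumN x)
  (min_PS_rep_size_gt0 M_neq0 repN).
have eq_i : i = i' by apply: min_PS_rep_In_N_inj repN _ => x /sNK /sKN.
by exists j => x; split=> [/sNK|/sKN]; rewrite -?eq_i.
Qed.

End PSHollowRepresentations.

Theorem theorem5p9 (R : comNzRingType) (M : lmodType R)
    (hR : artinian R) (hM : exists x : M, x <> 0)
    (n m : nat) (N : 'I_n -> M -> Prop) (H : 'I_n -> (R -> Prop) -> Prop)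
    (K : 'I_m -> M -> Prop) (H' : 'I_m -> (R -> Prop) -> Prop)
    (hN : min_PS_rep N H) (hK : min_PS_rep K H') :
  n = m /\
  (forall i, exists j, same_ideal_set (H i) (H' j)) /\
  (forall j, exists i, same_ideal_set (H i) (H' j)) /\
  (forall i j, same_ideal_set (H i) (H' j) ->
     forall x, In_N (N i) x <-> In_N (K j) x).
Proof.
have [[HN _ _ _] [HK _ _ _]] := (hN, hK).
pose same_In i j := forall x, In_N (N i) x <-> In_N (K j) x.
have matchN : forall i, exists j, same_In i j.
  exact: min_PS_rep_In_N_match hR hM hN hK.
have matchK : forall j, exists i, same_In i j.
  move=> j; have [i eqIn] := min_PS_rep_In_N_match hR hM hK hN j.
  by exists i => x; apply: iff_sym.
have same_H i j : same_In i j -> same_ideal_set (H i) (H' j).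
  by move=> eqIn I; rewrite -(HN i).2 -(HK j).2; apply: H_N_eq_In_N.
split; [|split; [|split]].
- apply/eqP; rewrite eqn_leq; apply/andP; split.
    apply: (leq_of_left_unique_total matchN) => i i' j e e'.
    by apply: min_PS_rep_In_N_inj hN _ => x /e /e'.
  apply: (leq_of_left_unique_total (r := fun j i => same_In i j) matchK).
  by move=> j j' i e e'; apply: min_PS_rep_In_N_inj hK _ => x /e /e'.
- by move=> i; have [j /same_H] := matchN i; exists j.
- by move=> j; have [i /same_H] := matchK j; exists i.
- by move=> i j eqH; apply: In_N_ext => I; rewrite (HN i).2 (HK j).2.
Qed.
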